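(* For every positive integer $N$ and every admissible index $\boldsymbol{k}=(k_1,\dots,k_r)$, \[ \zeta^{\diamondsuit\star}_N(\boldsymbol{k})=\sum_{A\subset[r]^1_{\boldsymbol{k}}}\ \sum_{(n_1,\dots,n_r)\in S^\star_{r,N}(A)}\Bigl(\prod_{i\in A}\frac1{N-n_i}\Bigr)\Bigl(\prod_{i\in[r]\setminus A}\frac1{n_i^{k_i}}\Bigr), \] where $S^\star_{r,N}(A)$ is the set of $(n_1,\dots,n_r)\in[N-1]^r$ such that for each $i\in[r-1]$: $n_i\le n_{i+1}$ if $i\in A$ or $i+1\notin A$, and $n_i<n_{i+1}$ if $i\notin A$ and $i+1\in A$.
   Context: $[n]=\{1,\dots,n\}$. An index is a tuple of positive integers; admissible = nonempty with last entry $\ge2$. For admissible $\boldsymbol{k}=(k_1,\dots,k_r)$: $[r]^1_{\boldsymbol{k}}=\{i:k_i=1\}$, $S_{r,N}(A)=\{(n_1,\dots,n_r)\in[N-1]^r: n_i\le n_{i+1}\ (i\in A),\ n_i<n_{i+1}\ (i\in[r-1]\setminus A)\}$, $\zeta^\diamondsuit_N(\boldsymbol{k})=\sum_{A\subset[r]^1_{\boldsymbol{k}}}\sum_{S_{r,N}(A)}\prod_{i\in A}(N-n_i)^{-1}\prod_{i\notin A}n_i^{-k_i}$. Write $\boldsymbol{l}\preceq\boldsymbol{k}$ if $\boldsymbol{l}$ is obtained by filling each $\square$ in $(k_1\,\square\cdots\square\,k_r)$ with a comma or a plus sign. $\zeta^{\diamondsuit\star}_N(\boldsymbol{k})=\sum_{\boldsymbol{l}\preceq\boldsymbol{k}}\zeta^\diamondsuit_N(\boldsymbol{l})$.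 *)

From mathcomp Require Import all_boot all_order all_algebra.
Set Implicit Arguments. Unset Strict Implicit. Unset Printing Implicit Defensive.
Import Order.TTheory GRing.Theory Num.Theory.
Local Open Scope ring_scope.

(* An index is a seq nat; positions are 0-based: entry i of the paper is
   nth 0 k (i-1). *)
Definition admissible (k : seq nat) : bool :=
  [&& k != [::], all (fun a => 0 < a)%N k & (1 < last 0%N k)%N].

Definition vals (r N : nat) (f : {ffun 'I_r -> 'I_N}) : seq nat :=
  [seq nat_of_ord (f i) | i <- enum 'I_r].

Definition inA (r : nat) (A : {set 'I_r}) (j : nat) : bool :=
  j \in [seq nat_of_ord i | i <- enum A].

(* membership in [N-1]^r : all values >= 1 (and < N by the type 'I_N) *)
Definition in_range (r N : nat) (f : {ffun 'I_r -> 'I_N}) : bool :=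
  [forall i : 'I_r, (0 < f i)%N].

Definition S_set (r N : nat) (A : {set 'I_r}) (f : {ffun 'I_r -> 'I_N}) : bool :=
  in_range f &&
  [forall i : 'I_r, (i.+1 < r)%N ==>
     (let s := vals f in
      if inA A i then (nth 0 s i <= nth 0 s i.+1)%N
      else (nth 0 s i < nth 0 s i.+1)%N)].

Definition Sstar_set (r N : nat) (A : {set 'I_r}) (f : {ffun 'I_r -> 'I_N}) : bool :=
  in_range f &&
  [forall i : 'I_r, (i.+1 < r)%N ==>
     (let s := vals f in
      if inA A i || ~~ inA A i.+1 then (nth 0 s i <= nth 0 s i.+1)%N
      else (nth 0 s i < nth 0 s i.+1)%N)].

Definition in_ones (k : seq nat) (A : {set 'I_(size k)}) : bool :=
  [forall i in A, nth 0%N k i == 1%N].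

Definition summand (k : seq nat) (N : nat) (A : {set 'I_(size k)})
  (f : {ffun 'I_(size k) -> 'I_N}) : rat :=
  (\prod_(i in A) ((N - f i)%:R)^-1) *
  (\prod_(i in ~: A) (((f i)%:R) ^+ (nth 0%N k i))^-1).

Definition zeta_diamond (N : nat) (k : seq nat) : rat :=
  \sum_(A : {set 'I_(size k)} | in_ones A)
    \sum_(f : {ffun 'I_(size k) -> 'I_N} | S_set A f) summand A f.

(* All indices l obtained from k by filling each box with a comma or a plus
   (one entry per filling; distinct fillings give distinct indices). *)
Fixpoint coarsenings (k : seq nat) : seq (seq nat) :=
  match k with
  | [::] => [:: [::]]
  | a :: t =>
      match t with
      | [::] => [:: [:: a]]
      | _ => flatten [seq [:: a :: l; (a + head 0 l)%N :: behead l]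
                     | l <- coarsenings t]
      end
  end.

Definition zeta_diamond_star (N : nat) (k : seq nat) : rat :=
  \sum_(l <- coarsenings k) zeta_diamond N l.

Example coarsen_ex : coarsenings [:: 1; 2; 3]%N =
  [:: [:: 1; 2; 3]; [:: 3; 3]; [:: 1; 5]; [:: 6]]%N.
Proof. by []. Qed.

From mathcomp Require Import all_boot all_order all_algebra ring.
Set Implicit Arguments. Unset Strict Implicit. Unset Printing Implicit Defensive.
Import GRing.Theory.
Local Open Scope ring_scope.

(* Both sides sum over value sequences [n_1, ..., n_r] whose entries are labelled
   by membership in [A], so both are computed by one transfer recursion along the
   index, [transfer_sum], whose state records whether the next unlabelled, resp.
   labelled, value may equal the current one.  In [S_{r,N}(A)] an unlabelled
   value forces a strict increase; [S*_{r,N}(A)] also lets it equal a following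
   unlabelled value.  Such a tie [n_i = n_{i+1}] weighs
   [n_i^{-k_i} n_i^{-k_{i+1}} = n_i^{-(k_i + k_{i+1})}], the weight of the
   coarsening with a plus in box [i]; hence summing the comma and plus fillings
   of the first box turns the strict recursion into the star one, and the
   identity follows by induction on the index.  Merged entries are at least 2,
   so they are never labelled. *)

Definition lteqn (b : bool) (m n : nat) : bool := if b then (m <= n)%N else (m < n)%N.

Lemma lteqnW b m n : lteqn b m n -> (m <= n)%N.
Proof. by case: b => //= /ltnW. Qed.

(* A labelled entry [(a, n)] is a value [n] with [a] true iff its position is in
   [A].  A state [s] constrains the step from the current value [p] to the next
   entry: [s.1] for an unlabelled entry, [s.2] for a labelled one, [true] meaning
   that equality is allowed. *)
Definition admits (s : bool * bool) (p : nat) (y : bool * nat) : bool :=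
  lteqn (if y.1 then s.2 else s.1) p y.2.

(* [c] is the state after an unlabelled entry. *)
Definition after (c : bool * bool) (a : bool) : bool * bool :=
  if a then (true, true) else c.

Definition step (c : bool * bool) (x y : bool * nat) : bool := admits (after c x.1) x.2 y.

Definition chain (c s : bool * bool) (p : nat) (t : seq (bool * nat)) : bool :=
  if t is y :: t' then admits s p y && path (step c) y t' else true.

Lemma chain_cons c s p y t :
  chain c s p (y :: t) = admits s p y && chain c (after c y.1) y.2 t.
Proof. by case: t. Qed.

Definition labelled_entries (N : nat) : seq (bool * nat) :=
  [seq (a, v) | a <- [:: false; true], v <- index_iota 0 N].

Fixpoint labelled_seqs (N r : nat) : seq (seq (bool * nat)) :=
  if r is r'.+1 then [seq y :: t | y <- labelled_entries N, t <- labelled_seqs N r']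
  else [:: [::]].

Section Transfer.

Variables (R : comNzRingType) (N : nat) (w : nat -> nat -> R) (u : nat -> R).

(* The factor [(h == 1)%:R] enforces [A \subset [r]^1_k]. *)
Definition entry_weight (y : bool * nat) (h : nat) : R :=
  if y.1 then (h == 1)%N%:R * u y.2 else w y.2 h.

Definition weight (k : seq nat) (t : seq (bool * nat)) : R :=
  \prod_(q <- zip t k) entry_weight q.1 q.2.

Lemma weight_cons h k y t : weight (h :: k) (y :: t) = entry_weight y h * weight k t.
Proof. exact: big_cons. Qed.

Fixpoint transfer_sum (c : bool * bool) (k : seq nat) (s : bool * bool) (p : nat) : R :=
  if k is h :: k' then
    \sum_(0 <= v < N) ((lteqn s.1 p v)%:R * w v h * transfer_sum c k' c v
      + (lteqn s.2 p v)%:R * ((h == 1)%N%:R * u v) * transfer_sum c k' (true, true) v)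
  else 1.

Lemma transfer_sum_cons c h k s p : transfer_sum c (h :: k) s p =
  \sum_(0 <= v < N) ((lteqn s.1 p v)%:R * w v h * transfer_sum c k c v
    + (lteqn s.2 p v)%:R * ((h == 1)%N%:R * u v) * transfer_sum c k (true, true) v).
Proof. by []. Qed.

Arguments transfer_sum : simpl never.

Lemma big_labelled_seqsS r (F : seq (bool * nat) -> R) :
  \sum_(t <- labelled_seqs N r.+1) F t =
  \sum_(0 <= v < N) \sum_(t <- labelled_seqs N r) F ((false, v) :: t) +
  \sum_(0 <= v < N) \sum_(t <- labelled_seqs N r) F ((true, v) :: t).
Proof.
by rewrite /= big_allpairs_dep /labelled_entries big_allpairs big_cons big_seq1.
Qed.

Lemma natr_andb (a b : bool) : (a && b)%:R = a%:R * b%:R :> R.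
Proof. by rewrite -mulnb natrM. Qed.

Lemma transfer_sumE c k s p :
  \sum_(t <- labelled_seqs N (size k)) (chain c s p t)%:R * weight k t
  = transfer_sum c k s p.
Proof.
elim: k s p => [|h k IH] s p; first by rewrite big_seq1 /weight big_nil mulr1.
rewrite [size _]/= big_labelled_seqsS transfer_sum_cons -big_split.
apply: eq_bigr => v _; rewrite -!IH !big_distrr.
by congr (_ + _); apply: eq_bigr => t _;
  rewrite chain_cons weight_cons natr_andb /entry_weight /admits /=; ring.
Qed.

Lemma transfer_sum_tie c h k p : (p < N)%N ->
  transfer_sum c (h :: k) (true, false) p =
  transfer_sum c (h :: k) (false, false) p + w p h * transfer_sum c k c p.
Proof.
move=> pN; rewrite !transfer_sum_cons.
have -> : w p h * transfer_sum c k c p =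
    \sum_(0 <= v < N | v == p) w v h * transfer_sum c k c v.
  by rewrite big_nat1_eq leq0n pN.
rewrite [X in _ + X]big_mkcond -big_split; apply: eq_big_nat => v _ /=.
by case: (ltngtP p v) => [lt|gt|eq_pv];
  rewrite ?(gtn_eqF lt) ?(ltn_eqF gt) ?eq_pv ?eqxx /=; ring.
Qed.

Hypothesis wD : forall v a b, w v (a + b) = w v a * w v b.

Lemma transfer_sum_merge a h k s p : (0 < a)%N -> (0 < h)%N ->
  transfer_sum (false, false) (a :: h :: k) s p +
  transfer_sum (false, false) ((a + h) :: k) s p =
  \sum_(0 <= v < N) ((lteqn s.1 p v)%:R * w v a *
                      transfer_sum (false, false) (h :: k) (true, false) v
    + (lteqn s.2 p v)%:R * ((a == 1)%N%:R * u v) *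
                      transfer_sum (false, false) (h :: k) (true, true) v).
Proof.
move=> a_gt0 h_gt0; have ah1 : (a + h == 1)%N = false.
  by apply/negbTE; rewrite neq_ltn; apply/orP; right; exact: leq_add a_gt0 h_gt0.
rewrite !transfer_sum_cons -big_split; apply: eq_big_nat => v /andP[_ vN].
by rewrite transfer_sum_tie // ah1 wD /=; ring.
Qed.

Lemma coarsenings_pos k l : all (fun a => 0 < a)%N k -> l \in coarsenings k ->
  all (fun a => 0 < a)%N l && ((0 < size l) == (0 < size k))%N.
Proof.
elim: k l => [|a t IH] l /=; first by rewrite inE => _ /eqP ->.
case/andP=> a_gt0 t_pos; case: t IH t_pos => [|b t] IH t_pos.
  by rewrite inE => /eqP -> /=; rewrite a_gt0.
case/flattenP=> _ /mapP[l' l'_in ->].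
case/andP: (IH l' t_pos l'_in); case: l' {l'_in} => [|h r] //= /andP[h_gt0 r_pos] _.
by rewrite !inE => /orP[] /eqP -> /=; rewrite ?a_gt0 ?h_gt0 ?r_pos ?addn_gt0 ?a_gt0.
Qed.

Lemma sum_coarsenings_transfer k s p : all (fun a => 0 < a)%N k ->
  \sum_(l <- coarsenings k) transfer_sum (false, false) l s p =
  transfer_sum (true, false) k s p.
Proof.
elim: k s p => [|a t IH] s p /=; first by rewrite big_seq1.
case/andP=> a_gt0 t_pos; case: t IH t_pos => [|b t] IH t_pos.
  by rewrite big_seq1 !transfer_sum_cons.
rewrite big_flatten /= big_map.
rewrite (eq_big_seq (fun l => \sum_(0 <= v < N)
      ((lteqn s.1 p v)%:R * w v a * transfer_sum (false, false) l (true, false) v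
     + (lteqn s.2 p v)%:R * ((a == 1)%N%:R * u v) *
                                transfer_sum (false, false) l (true, true) v))); last first.
  move=> l l_in; case/andP: (coarsenings_pos t_pos l_in).
  case: l l_in => [|h r] //= _ /andP[h_gt0 _] _.
  by rewrite big_cons big_seq1 transfer_sum_merge.
rewrite exchange_big transfer_sum_cons; apply: eq_big_nat => v _.
by rewrite big_split -!IH // !big_distrr.
Qed.

End Transfer.

Definition labelled_vals r N (A : {set 'I_r}) (f : {ffun 'I_r -> 'I_N}) : seq (bool * nat) :=
  [seq (i \in A, nat_of_ord (f i)) | i <- enum 'I_r].

Section LabelledVals.

Variables (r N : nat).
Implicit Types (A : {set 'I_r}) (f : {ffun 'I_r -> 'I_N}).

Lemma size_labelled_vals A f : size (labelled_vals A f) = r.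
Proof. by rewrite size_map size_enum_ord. Qed.

Lemma nth_labelled_vals_ord A f (i : 'I_r) :
  nth (false, 0%N) (labelled_vals A f) i = (i \in A, nat_of_ord (f i)).
Proof. by rewrite (nth_map i) ?size_enum_ord ?ltn_ord // nth_ord_enum. Qed.

Lemma nth_labelled_vals A f i : (i < r)%N ->
  nth (false, 0%N) (labelled_vals A f) i = (inA A i, nth 0%N (vals f) i).
Proof.
move=> ir; have -> : i = Ordinal ir by [].
rewrite nth_labelled_vals_ord /inA /vals (mem_map val_inj) mem_enum.
by rewrite (nth_map (Ordinal ir)) ?size_enum_ord // nth_ord_enum.
Qed.

Lemma labelled_vals_inj :
  injective (fun Af : {set 'I_r} * {ffun 'I_r -> 'I_N} => labelled_vals Af.1 Af.2).
Proof.
move=> [A f] [B g] /= eq_AfBg.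
have eq_i (i : 'I_r) : (i \in A, nat_of_ord (f i)) = (i \in B, nat_of_ord (g i)).
  by rewrite -!nth_labelled_vals_ord eq_AfBg.
congr (_, _); first by apply/setP => i; case: (eq_i i).
by apply/ffunP => i; apply: val_inj; case: (eq_i i).
Qed.

Lemma mem_labelled_seqs t :
  (t \in labelled_seqs N r) = (size t == r) && all (fun y => y.2 < N)%N t.
Proof.
elim: r t => [|r' IH] [|y t] //=.
  by apply/negbTE/allpairsP => -[[? ?]] [].
apply/allpairsP/andP => [[[y' t'] [/= y'_in t'_in [-> ->]]]|[size_t /andP[yN tN]]].
  move: t'_in y'_in; rewrite IH => /andP[/eqP -> ->] /allpairsP[[a v] [_ /= v_in ->]].
  by move: v_in; rewrite mem_index_iota andbT.
exists (y, t); split => //; last by rewrite IH -eqSS size_t tN.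
by case: y yN => a v /= vN; apply: allpairs_f; rewrite ?mem_index_iota //; case: a.
Qed.

Lemma uniq_labelled_seqs : uniq (labelled_seqs N r).
Proof.
elim: r => [|r' IH] //=; apply: allpairs_uniq => //; last by move=> [? ?] [? ?] _ _ [-> ->].
apply: allpairs_uniq => //; first exact: iota_uniq.
by move=> [? ?] [? ?] _ _ [-> ->].
Qed.

Lemma big_labelled_vals (R : nmodType) (G : seq (bool * nat) -> R) :
  \sum_(A : {set 'I_r}) \sum_(f : {ffun 'I_r -> 'I_N}) G (labelled_vals A f) =
  \sum_(t <- labelled_seqs N r) G t.
Proof.
rewrite pair_bigA /=.
rewrite -(big_map (fun Af : {set 'I_r} * {ffun 'I_r -> 'I_N} => labelled_vals Af.1 Af.2) xpredT G).
apply: perm_big; apply: uniq_perm.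
- by rewrite (map_inj_uniq labelled_vals_inj) index_enum_uniq.
- exact: uniq_labelled_seqs.
move=> t; rewrite mem_labelled_seqs; apply/mapP/andP => [[[A f] _ ->]|[/eqP size_t tN]].
  by rewrite size_labelled_vals all_map; split => //; apply/allP => i _ /=.
have ltN (i : 'I_r) : ((nth (false, 0%N) t i).2 < N)%N.
  by apply: (all_nthP (false, 0%N) tN); rewrite size_t.
exists ([set i : 'I_r | (nth (false, 0%N) t i).1], [ffun i => Ordinal (ltN i)]).
  exact: mem_index_enum.
apply: (@eq_from_nth _ (false, 0%N)); rewrite ?size_labelled_vals // => i.
rewrite size_t => ir; have -> : i = Ordinal ir by [].
by rewrite nth_labelled_vals_ord /= inE ffunE /= -surjective_pairing.
Qed.

Lemma sorted_labelled_vals A f (e : rel (bool * nat)) :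
  sorted e (labelled_vals A f) =
  [forall i : 'I_r, (i.+1 < r)%N ==>
     e (inA A i, nth 0%N (vals f) i) (inA A i.+1, nth 0%N (vals f) i.+1)].
Proof.
apply/(sortedP (false, 0%N))/forallP; rewrite size_labelled_vals.
  move=> e_adj i; apply/implyP => ir.
  by have := e_adj i ir; rewrite !nth_labelled_vals // ltnW.
move=> e_adj i ir; have ir' := ltnW ir.
by have := e_adj (Ordinal ir'); rewrite /= ir !nth_labelled_vals.
Qed.

Lemma in_range_labelled_vals A f :
  in_range f = all (fun y => 0 < y.2)%N (labelled_vals A f).
Proof.
rewrite all_map; apply/forallP/allP => [pos i _|pos i]; first exact: pos.
exact: pos (mem_enum _ i).
Qed.

End LabelledVals.

Lemma S_setE r N (A : {set 'I_r}) (f : {ffun 'I_r -> 'I_N}) :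
  S_set A f = in_range f && sorted (step (false, false)) (labelled_vals A f).
Proof.
rewrite /S_set sorted_labelled_vals; congr (_ && _); apply: eq_forallb => i.
by case: (inA A i); case: (inA A i.+1).
Qed.

Lemma Sstar_setE r N (A : {set 'I_r}) (f : {ffun 'I_r -> 'I_N}) :
  Sstar_set A f = in_range f && sorted (step (true, false)) (labelled_vals A f).
Proof.
rewrite /Sstar_set sorted_labelled_vals; congr (_ && _); apply: eq_forallb => i.
by case: (inA A i); case: (inA A i.+1).
Qed.

Lemma path_step_min c y t : path (step c) y t -> all (fun z => y.2 <= z.2)%N t.
Proof.
move=> /(sub_path (e' := fun x z => x.2 <= z.2)%N) y_t.
apply: (order_path_min _ (y_t _)) => [x z v|x z]; first exact: leq_trans.
exact: lteqnW.
Qed.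

(* Positivity of the first value propagates along a path of [step c]. *)
Lemma pos_sorted_chain c t :
  all (fun y => 0 < y.2)%N t && sorted (step c) t = chain c (false, false) 0 t.
Proof.
case: t => [|y t] //=; have -> : admits (false, false) 0 y = (0 < y.2)%N by case: y => [[] ?].
apply/idP/idP => [/andP[/andP[-> _] ->] //|/andP[y_gt0 y_t]].
rewrite y_gt0 y_t andbT /=; apply/allP => z z_in.
exact: leq_trans y_gt0 (allP (path_step_min y_t) z z_in).
Qed.

Definition zeta_weight (v h : nat) : rat := (v%:R ^+ h)^-1.
Definition dual_weight (N v : nat) : rat := (N - v)%:R^-1.

Lemma zeta_weightD v a b : zeta_weight v (a + b) = zeta_weight v a * zeta_weight v b.
Proof. by rewrite /zeta_weight exprD invfM. Qed.

Lemma summand_weight k N (A : {set 'I_(size k)}) (f : {ffun 'I_(size k) -> 'I_N}) :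
  (in_ones A)%:R * summand A f = weight zeta_weight (dual_weight N) k (labelled_vals A f).
Proof.
rewrite /weight (big_nth ((false, 0%N), 0%N)) size_zip size_labelled_vals minnn big_mkord.
rewrite (bigID (mem A)) /= /summand mulrA; congr (_ * _).
  have nat_of_andb : {morph nat_of_bool : a b / a && b >-> (a * b)%N}.
    by move=> a b; rewrite mulnb.
  rewrite /in_ones -big_andE (big_morph _ nat_of_andb (erefl : nat_of_bool true = 1%N)).
  rewrite natr_prod -big_split /=; apply: eq_bigr => i i_A.
  by rewrite nth_zip ?size_labelled_vals // nth_labelled_vals_ord /entry_weight /= i_A.
apply: eq_big => [i|i]; rewrite inE // => i_nA.
by rewrite nth_zip ?size_labelled_vals // nth_labelled_vals_ord /entry_weight /= (negbTE i_nA).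
Qed.

Lemma sum_sorted_transfer c k N :
  \sum_(A : {set 'I_(size k)} | in_ones A)
    \sum_(f : {ffun 'I_(size k) -> 'I_N} | in_range f && sorted (step c) (labelled_vals A f))
      summand A f =
  transfer_sum N zeta_weight (dual_weight N) c k (false, false) 0.
Proof.
rewrite -transfer_sumE -big_labelled_vals big_mkcond; apply: eq_bigr => A _.
rewrite big_mkcond /=; case: (boolP (in_ones A)) => [A_ones|A_nones].
  apply: eq_bigr => f _; rewrite -summand_weight A_ones mul1r.
  by rewrite (in_range_labelled_vals A) pos_sorted_chain; case: chain; rewrite ?mul1r ?mul0r.
by rewrite big1 // => f _; rewrite -summand_weight (negbTE A_nones) /= mul0r mulr0.
Qed.

Lemma zeta_diamond_transfer N k :
  zeta_diamond N k = transfer_sum N zeta_weight (dual_weight N) (false, false) k (false, false) 0.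
Proof.
rewrite -sum_sorted_transfer; apply: eq_bigr => A _.
by apply: eq_bigl => f; rewrite S_setE.
Qed.

Lemma sum_Sstar_transfer N k :
  \sum_(A : {set 'I_(size k)} | in_ones A)
    \sum_(f : {ffun 'I_(size k) -> 'I_N} | Sstar_set A f) summand A f =
  transfer_sum N zeta_weight (dual_weight N) (true, false) k (false, false) 0.
Proof.
rewrite -sum_sorted_transfer; apply: eq_bigr => A _.
by apply: eq_bigl => f; rewrite Sstar_setE.
Qed.

Theorem mainTheorem11 (N : nat) (k : seq nat) :
  (0 < N)%N -> admissible k ->
  zeta_diamond_star N k =
  \sum_(A : {set 'I_(size k)} | in_ones A)
    \sum_(f : {ffun 'I_(size k) -> 'I_N} | Sstar_set A f) summand A f.
Proof.
move=> _ /and3P[_ k_pos _].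
rewrite sum_Sstar_transfer -sum_coarsenings_transfer //; last exact: zeta_weightD.
by apply: eq_bigr => l _; rewrite zeta_diamond_transfer.
Qed.
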